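(* Let $f:\Sigma\to\mathbb{S}^4_1$ be a non-isotropic conformally immersed marginally trapped surface with non-zero mean curvature vector. Then the following are equivalent: (i) the quartic differential $Q=\langle f_{zz},f_{zz}\rangle dz^4$ is holomorphic; (ii) the quadratic differential $\delta=h(\xi_1-\xi_2)dz^2$ is holomorphic; (iii) $f$ has parallel mean curvature vector, $\nabla^\perp\mathbf H=0$.
   Context: $\mathbb{R}^5_1$ is $\mathbb{R}^5$ with $\langle x,y\rangle=x_0y_0+x_1y_1+x_2y_2+x_3y_3-x_4y_4$ (complex-bilinearly extended), $\mathbb{S}^4_1=\{\langle x,x\rangle=1\}$, future pointing means $\langle X,e_4\rangle<0$. $f$ conformal spacelike immersion with $\langle f_z,f_{\bar z}\rangle=e^{2u}$; positively oriented orthonormal normal frame $\{N_1,N_2\}$: $\langle N_1,N_1\rangle=1,\langle N_2,N_2\rangle=-1,\langle N_1,N_2\rangle=0$, $N_2$ future pointing, orientation of $\nu(f)$; $\xi_1=\langle f_{zz},N_1\rangle$, $\xi_2=-\langle f_{zz},N_2\rangle$ (so $Q=(\xi_1^2-\xi_2^2)dz^4$). $\mathbf H$: $f_{z\bar z}=-e^{2u}f+e^{2u}\mathbf H$; $\nabla^\perp$ normal connection; marginally trapped: $\langle\mathbf H,\mathbf H\rangle=0$, orientation chosen so $\mathbf H=h(N_1+N_2)$. Non-isotropic: $Q$ vanishes nowhere. *)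

From Stdlib Require Import Reals List ClassicalEpsilon.
Open Scope R_scope.

(** * Real calculus in two variables (local conformal coordinate z = x + i y) *)

Definition D1 (g : R -> R) (x : R) : R :=
  epsilon (inhabits 0) (fun l => derivable_pt_lim g x l).
Definition px (g : R -> R -> R) (x y : R) : R := D1 (fun t => g t y) x.
Definition py (g : R -> R -> R) (x y : R) : R := D1 (fun t => g x t) y.

Fixpoint iterD (w : list bool) (g : R -> R -> R) : R -> R -> R :=
  match w with
  | nil => g
  | b :: w' => if b then px (iterD w' g) else py (iterD w' g)
  end.

Definition open2 (U : R -> R -> Prop) : Prop :=
  forall x y, U x y -> exists e, 0 < e /\
    forall a b, (a - x) ^ 2 + (b - y) ^ 2 < e ^ 2 -> U a b.

Definition cont2 (g : R -> R -> R) (x y : R) : Prop :=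
  forall eps, 0 < eps -> exists d, 0 < d /\
    forall a b, (a - x) ^ 2 + (b - y) ^ 2 < d ^ 2 -> Rabs (g a b - g x y) < eps.

Definition smooth_on (U : R -> R -> Prop) (g : R -> R -> R) : Prop :=
  forall w x y, U x y ->
    (exists l, derivable_pt_lim (fun t => iterD w g t y) x l) /\
    (exists l, derivable_pt_lim (fun t => iterD w g x t) y l) /\
    cont2 (iterD w g) x y.

Record V5 := mkV { c0 : R; c1 : R; c2 : R; c3 : R; c4 : R }.

Definition lor (u v : V5) : R :=
  c0 u * c0 v + c1 u * c1 v + c2 u * c2 v + c3 u * c3 v - c4 u * c4 v.
Definition vzero : V5 := mkV 0 0 0 0 0.
Definition e4 : V5 := mkV 0 0 0 0 1.
Definition vadd (u v : V5) : V5 :=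
  mkV (c0 u + c0 v) (c1 u + c1 v) (c2 u + c2 v) (c3 u + c3 v) (c4 u + c4 v).
Definition vscal (a : R) (u : V5) : V5 :=
  mkV (a * c0 u) (a * c1 u) (a * c2 u) (a * c3 u) (a * c4 u).
Definition vsub (u v : V5) : V5 := vadd u (vscal (-1) v).

Definition vpx (F : R -> R -> V5) (x y : R) : V5 :=
  mkV (px (fun a b => c0 (F a b)) x y) (px (fun a b => c1 (F a b)) x y)
      (px (fun a b => c2 (F a b)) x y) (px (fun a b => c3 (F a b)) x y)
      (px (fun a b => c4 (F a b)) x y).
Definition vpy (F : R -> R -> V5) (x y : R) : V5 :=
  mkV (py (fun a b => c0 (F a b)) x y) (py (fun a b => c1 (F a b)) x y)
      (py (fun a b => c2 (F a b)) x y) (py (fun a b => c3 (F a b)) x y)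
      (py (fun a b => c4 (F a b)) x y).

Definition smoothV_on (U : R -> R -> Prop) (F : R -> R -> V5) : Prop :=
  smooth_on U (fun a b => c0 (F a b)) /\ smooth_on U (fun a b => c1 (F a b)) /\
  smooth_on U (fun a b => c2 (F a b)) /\ smooth_on U (fun a b => c3 (F a b)) /\
  smooth_on U (fun a b => c4 (F a b)).

Definition Cx := (R * R)%type.           (* (re, im) *)
Definition czero : Cx := (0, 0).
Definition csub (a b : Cx) : Cx := (fst a - fst b, snd a - snd b).
Definition cmul (a b : Cx) : Cx :=
  (fst a * fst b - snd a * snd b, fst a * snd b + snd a * fst b).
Definition crscal (r : R) (a : Cx) : Cx := (r * fst a, r * snd a).
Definition copp (a : Cx) : Cx := (- fst a, - snd a).

Definition CV := (V5 * V5)%type.         (* A + i B *)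
Definition cv_of (v : V5) : CV := (v, vzero).
(* complex-bilinear extension of <,> *)
Definition clor (u v : CV) : Cx :=
  (lor (fst u) (fst v) - lor (snd u) (snd v),
   lor (fst u) (snd v) + lor (snd u) (fst v)).

(* d/dz = (d/dx - i d/dy)/2 and d/dzbar = (d/dx + i d/dy)/2 *)
Definition cvdz (G : R -> R -> CV) (x y : R) : CV :=
  let A := fun a b => fst (G a b) in let B := fun a b => snd (G a b) in
  (vscal (1/2) (vadd (vpx A x y) (vpy B x y)),
   vscal (1/2) (vsub (vpx B x y) (vpy A x y))).
Definition cvdzbar (G : R -> R -> CV) (x y : R) : CV :=
  let A := fun a b => fst (G a b) in let B := fun a b => snd (G a b) in
  (vscal (1/2) (vsub (vpx A x y) (vpy B x y)),
   vscal (1/2) (vadd (vpx B x y) (vpy A x y))).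

Definition cdzbar (g : R -> R -> Cx) (x y : R) : Cx :=
  let u := fun a b => fst (g a b) in let v := fun a b => snd (g a b) in
  ((px u x y - py v x y) / 2, (px v x y + py u x y) / 2).

(* holomorphic on U: (real) smooth and d/dzbar g = 0 (holomorphic functions are
   smooth, so this is equivalent to the usual notion) *)
Definition holo_on (U : R -> R -> Prop) (g : R -> R -> Cx) : Prop :=
  smooth_on U (fun a b => fst (g a b)) /\ smooth_on U (fun a b => snd (g a b)) /\
  (forall x y, U x y -> cdzbar g x y = czero).

Definition f_z (f : R -> R -> V5) : R -> R -> CV := cvdz (fun a b => cv_of (f a b)).
Definition f_zbar (f : R -> R -> V5) : R -> R -> CV := cvdzbar (fun a b => cv_of (f a b)).
Definition f_zz (f : R -> R -> V5) : R -> R -> CV := cvdz (f_z f).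
Definition f_zzbar (f : R -> R -> V5) : R -> R -> CV := cvdzbar (f_z f).
(* e^{2u} = <f_z, f_zbar> (a real number) *)
Definition e2u (f : R -> R -> V5) (x y : R) : R := fst (clor (f_z f x y) (f_zbar f x y)).

(* Q = <f_zz, f_zz> dz^4 (coefficient) *)
Definition Qcoef (f : R -> R -> V5) (x y : R) : Cx := clor (f_zz f x y) (f_zz f x y).
Definition xi1 (f N1 : R -> R -> V5) (x y : R) : Cx := clor (f_zz f x y) (cv_of (N1 x y)).
Definition xi2 (f N2 : R -> R -> V5) (x y : R) : Cx :=
  copp (clor (f_zz f x y) (cv_of (N2 x y))).
Definition delta_coef (f N1 N2 : R -> R -> V5) (h : R -> R -> R) (x y : R) : Cx :=
  crscal (h x y) (csub (xi1 f N1 x y) (xi2 f N2 x y)).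

(* normal projection onto span{N1,N2} (<N1,N1> = 1, <N2,N2> = -1) *)
Definition nproj (N1 N2 : V5) (v : V5) : V5 :=
  vsub (vscal (lor v N1) N1) (vscal (lor v N2) N2).

Definition parallel_mean_curv (U : R -> R -> Prop) (N1 N2 H : R -> R -> V5) : Prop :=
  forall x y, U x y ->
    nproj (N1 x y) (N2 x y) (vpx H x y) = vzero /\
    nproj (N1 x y) (N2 x y) (vpy H x y) = vzero.

(* Write z = x + i y, X = f_x, Y = f_y and put rho = <H_zbar, N1> / h.  Because
   H = h (N1 + N2) is null, the normal part of H_zbar is rho H, i.e. nabla^perp_zbar H = rho H.
   Differentiating delta = <f_zz, H> and Q = <f_zz, f_zz>, using f_zzbar = e^{2u} (H - f) and
   expanding every vector in the frame (f, X, Y, N1, N2), one finds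
     d delta / dzbar = rho delta   and   dQ / dzbar = 2 e^{2u} conj(rho) delta.
   Since Q vanishes wherever delta does, non-isotropy makes delta vanish nowhere, so each of the
   three conditions is equivalent to rho = 0. *)

From Pilot Require Import Defs.
From Stdlib Require Import Reals Lra Psatz.
From Stdlib Require Import ClassicalEpsilon FunctionalExtensionality PropExtensionality.
From Coquelicot Require Import Coquelicot.
From mathcomp Require all_boot all_algebra Rstruct.
(* The libraries above shadow [c0]; bring the names of [Defs] back into scope. *)
Import Defs.
Open Scope R_scope.

Lemma D1_eq g x l : derivable_pt_lim g x l -> D1 g x = l.
Proof.
  intros Hl. unfold D1.
  apply (uniqueness_limite g x); [|exact Hl].
  exact (epsilon_spec (inhabits 0) (fun l => derivable_pt_lim g x l) (ex_intro _ l Hl)).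
Qed.

Lemma derivable_pt_lim_local g k x e l :
  0 < e -> (forall t, Rabs (t - x) < e -> g t = k t) ->
  derivable_pt_lim g x l -> derivable_pt_lim k x l.
Proof.
  intros He Hgk Hd eps Heps. destruct (Hd eps Heps) as [d Hd'].
  assert (Hm : 0 < Rmin d e) by (apply Rmin_pos; [apply cond_pos | lra]).
  exists (mkposreal _ Hm). intros t Ht0 Ht. simpl in Ht.
  rewrite <- !Hgk.
  - apply Hd'; auto. apply Rlt_le_trans with (1 := Ht). apply Rmin_l.
  - rewrite Rminus_diag, Rabs_R0; lra.
  - replace (x + t - x) with t by ring. apply Rlt_le_trans with (1 := Ht). apply Rmin_r.
Qed.

Lemma D1_local g k x e :
  0 < e -> (forall t, Rabs (t - x) < e -> g t = k t) -> D1 g x = D1 k x.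
Proof.
  intros He Hgk. unfold D1. f_equal. apply functional_extensionality. intro l.
  apply propositional_extensionality. split; intro Hd.
  - eapply derivable_pt_lim_local; eauto.
  - eapply derivable_pt_lim_local with (g := k); eauto. intros t Ht; symmetry; auto.
Qed.

Lemma sq_lt_of_abs_lt a d : Rabs a < d -> a ^ 2 < d ^ 2.
Proof. intros H. rewrite <- (pow2_abs a). pose proof (Rabs_pos a). nra. Qed.

Lemma abs_lt_of_sq_lt a d : 0 < d -> a ^ 2 < d ^ 2 -> Rabs a < d.
Proof.
  intros Hd H. rewrite <- (pow2_abs a) in H.
  destruct (Rlt_or_le (Rabs a) d) as [|Hle]; auto. nra.
Qed.

Lemma sum_sq_lt a b d : Rabs a < d / 2 -> Rabs b < d / 2 -> a ^ 2 + b ^ 2 < d ^ 2.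
Proof.
  intros Ha Hb. assert (Hd : 0 < d) by (pose proof (Rabs_pos a); lra).
  apply sq_lt_of_abs_lt in Ha, Hb.
  replace ((d / 2) ^ 2) with (d ^ 2 / 4) in Ha, Hb by field.
  pose proof (pow_lt d 2 Hd). lra.
Qed.

Lemma cont2_continuity_2d_pt g x y : cont2 g x y <-> continuity_2d_pt g x y.
Proof.
  split.
  - intros Hc eps. destruct (Hc eps (cond_pos eps)) as [d [Hd Hd']].
    assert (Hd2 : 0 < d / 2) by lra.
    exists (mkposreal _ Hd2). intros u v Hu Hv. apply Hd', sum_sq_lt; auto.
  - intros Hc eps Heps. destruct (Hc (mkposreal eps Heps)) as [d Hd].
    exists d. split; [apply cond_pos|]. intros a b Hab.
    pose proof (pow2_ge_0 (a - x)). pose proof (pow2_ge_0 (b - y)).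
    apply Hd; apply abs_lt_of_sq_lt; try apply cond_pos; lra.
Qed.

Lemma continuity_2d_pt_local k k' x y d :
  0 < d -> continuity_2d_pt k x y ->
  (forall u v, Rabs (u - x) < d -> Rabs (v - y) < d -> k' u v = k u v) ->
  continuity_2d_pt k' x y.
Proof.
  intros Hd Hc Heq eps. destruct (Hc eps) as [d' Hd'].
  assert (Hm : 0 < Rmin d d') by (apply Rmin_pos; [lra|apply cond_pos]).
  exists (mkposreal _ Hm). simpl. intros u v Hu Hv.
  pose proof (Rmin_l d d'). pose proof (Rmin_r d d').
  rewrite (Heq u v), (Heq x y); try (rewrite Rminus_diag, Rabs_R0); try lra.
  apply Hd'; lra.
Qed.

Section OpenSet.
Variable U : R -> R -> Prop.
Hypothesis HU : open2 U.

Lemma open2_square x y :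
  U x y -> exists e, 0 < e /\ forall a b, Rabs (a - x) < e -> Rabs (b - y) < e -> U a b.
Proof.
  intros Hu. destruct (HU x y Hu) as [e [He He']]. exists (e / 2); split; [lra|].
  intros a b Ha Hb. apply He', sum_sq_lt; lra.
Qed.

Lemma open2_hslice x y : U x y -> exists e, 0 < e /\ forall t, Rabs (t - x) < e -> U t y.
Proof.
  intros Hu. destruct (open2_square x y Hu) as [e [He He']]. exists e; split; auto.
  intros t Ht. apply He'; auto. rewrite Rminus_diag, Rabs_R0; lra.
Qed.

Lemma open2_vslice x y : U x y -> exists e, 0 < e /\ forall t, Rabs (t - y) < e -> U x t.
Proof.
  intros Hu. destruct (open2_square x y Hu) as [e [He He']]. exists e; split; auto.
  intros t Ht. apply He'; auto. rewrite Rminus_diag, Rabs_R0; lra.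
Qed.

Lemma px_ext g k x y : (forall a b, U a b -> g a b = k a b) -> U x y -> px g x y = px k x y.
Proof.
  intros Hgk Hu. destruct (open2_hslice x y Hu) as [e [He He']].
  apply D1_local with e; auto.
Qed.

Lemma py_ext g k x y : (forall a b, U a b -> g a b = k a b) -> U x y -> py g x y = py k x y.
Proof.
  intros Hgk Hu. destruct (open2_vslice x y Hu) as [e [He He']].
  apply D1_local with e; auto.
Qed.

Definition pdiff_at (g : R -> R -> R) x y :=
  (exists l, derivable_pt_lim (fun t => g t y) x l) /\
  (exists l, derivable_pt_lim (fun t => g x t) y l) /\ continuity_2d_pt g x y.

Lemma pdiff_at_ext g k x y :
  U x y -> (forall a b, U a b -> g a b = k a b) -> pdiff_at g x y -> pdiff_at k x y.
Proof.
  intros Hu Hgk [[l1 H1] [[l2 H2] H3]]. split; [|split].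
  - exists l1. destruct (open2_hslice x y Hu) as [e [He He']].
    eapply derivable_pt_lim_local with (g := fun t => g t y); eauto.
  - exists l2. destruct (open2_vslice x y Hu) as [e [He He']].
    eapply derivable_pt_lim_local with (g := fun t => g x t); eauto.
  - destruct (open2_square x y Hu) as [e [He He']].
    apply continuity_2d_pt_local with g e; auto. intros; symmetry; auto.
Qed.

Lemma px_spec g x y : pdiff_at g x y -> derivable_pt_lim (fun t => g t y) x (px g x y).
Proof. intros [[l Hl] _]. unfold px. rewrite (D1_eq _ _ _ Hl). exact Hl. Qed.
Lemma py_spec g x y : pdiff_at g x y -> derivable_pt_lim (fun t => g x t) y (py g x y).
Proof. intros [_ [[l Hl] _]]. unfold py. rewrite (D1_eq _ _ _ Hl). exact Hl. Qed.

Lemma px_const c x y : px (fun _ _ => c) x y = 0.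
Proof. apply D1_eq, derivable_pt_lim_const. Qed.
Lemma py_const c x y : py (fun _ _ => c) x y = 0.
Proof. apply D1_eq, derivable_pt_lim_const. Qed.

Lemma px_add g k x y : pdiff_at g x y -> pdiff_at k x y ->
  px (fun a b => g a b + k a b) x y = px g x y + px k x y.
Proof.
  intros Hg Hk. apply D1_eq.
  apply (derivable_pt_lim_plus (fun t => g t y) (fun t => k t y)); apply px_spec; auto.
Qed.
Lemma py_add g k x y : pdiff_at g x y -> pdiff_at k x y ->
  py (fun a b => g a b + k a b) x y = py g x y + py k x y.
Proof.
  intros Hg Hk. apply D1_eq.
  apply (derivable_pt_lim_plus (fun t => g x t) (fun t => k x t)); apply py_spec; auto.
Qed.

Lemma px_sub g k x y : pdiff_at g x y -> pdiff_at k x y ->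
  px (fun a b => g a b - k a b) x y = px g x y - px k x y.
Proof.
  intros Hg Hk. apply D1_eq.
  apply (derivable_pt_lim_minus (fun t => g t y) (fun t => k t y)); apply px_spec; auto.
Qed.
Lemma py_sub g k x y : pdiff_at g x y -> pdiff_at k x y ->
  py (fun a b => g a b - k a b) x y = py g x y - py k x y.
Proof.
  intros Hg Hk. apply D1_eq.
  apply (derivable_pt_lim_minus (fun t => g x t) (fun t => k x t)); apply py_spec; auto.
Qed.

Lemma px_mul g k x y : pdiff_at g x y -> pdiff_at k x y ->
  px (fun a b => g a b * k a b) x y = px g x y * k x y + g x y * px k x y.
Proof.
  intros Hg Hk. apply D1_eq.
  apply (derivable_pt_lim_mult (fun t => g t y) (fun t => k t y)); apply px_spec; auto.
Qed.
Lemma py_mul g k x y : pdiff_at g x y -> pdiff_at k x y ->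
  py (fun a b => g a b * k a b) x y = py g x y * k x y + g x y * py k x y.
Proof.
  intros Hg Hk. apply D1_eq.
  apply (derivable_pt_lim_mult (fun t => g x t) (fun t => k x t)); apply py_spec; auto.
Qed.

Lemma derivable_pt_lim_inv (g : R -> R) x l : derivable_pt_lim g x l -> g x <> 0 ->
  derivable_pt_lim (fun t => / g t) x (- l * (/ g x * / g x)).
Proof.
  intros Hd Hn.
  pose proof (derivable_pt_lim_div (fun _ => 1) g x 0 l (derivable_pt_lim_const 1 x) Hd Hn) as H.
  replace (- l * (/ g x * / g x)) with ((0 * g x - l * 1) / (g x)²) by (unfold Rsqr; field; auto).
  replace (fun t => / g t) with ((fun _ : R => 1) / g)%F; auto.
  apply functional_extensionality; intro t; unfold div_fct, Rdiv; ring.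
Qed.

Lemma px_inv g x y : pdiff_at g x y -> g x y <> 0 ->
  px (fun a b => / g a b) x y = - px g x y * (/ g x y * / g x y).
Proof. intros Hg Hn. apply D1_eq, (derivable_pt_lim_inv (fun t => g t y)); auto using px_spec. Qed.
Lemma py_inv g x y : pdiff_at g x y -> g x y <> 0 ->
  py (fun a b => / g a b) x y = - py g x y * (/ g x y * / g x y).
Proof. intros Hg Hn. apply D1_eq, (derivable_pt_lim_inv (fun t => g x t)); auto using py_spec. Qed.

Lemma iterD_rcons w b g : iterD (w ++ b :: nil) g = iterD w (if b then px g else py g).
Proof. induction w as [|a w IH]; simpl; [reflexivity | rewrite IH; reflexivity]. Qed.

Lemma smooth_on_px g : smooth_on U g -> smooth_on U (px g).
Proof. intros Hs w x y Hu. rewrite <- (iterD_rcons w true). exact (Hs _ x y Hu). Qed.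
Lemma smooth_on_py g : smooth_on U g -> smooth_on U (py g).
Proof. intros Hs w x y Hu. rewrite <- (iterD_rcons w false). exact (Hs _ x y Hu). Qed.

(* Smoothness quantifies over all iterated derivatives, so its closure under the field
   operations is shown through this inductive class: its members satisfy [pdiff_at] and it is
   closed under [px] and [py] (see [Cinf_smooth_on]). *)
Inductive Cinf : (R -> R -> R) -> Prop :=
 | Cinf_of_smooth g : smooth_on U g -> Cinf g
 | Cinf_const c : Cinf (fun _ _ => c)
 | Cinf_add g k : Cinf g -> Cinf k -> Cinf (fun a b => g a b + k a b)
 | Cinf_mul g k : Cinf g -> Cinf k -> Cinf (fun a b => g a b * k a b)
 | Cinf_inv g : Cinf g -> (forall x y, U x y -> g x y <> 0) -> Cinf (fun a b => / g a b)
 | Cinf_ext g k : Cinf g -> (forall x y, U x y -> g x y = k x y) -> Cinf k.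

Lemma Cinf_pdiff g : Cinf g -> forall x y, U x y -> pdiff_at g x y.
Proof.
  induction 1 as [g Hs|c|g k _ IHg _ IHk|g k _ IHg _ IHk|g _ IHg Hn|g k _ IHg Hgk];
    intros x y Hu.
  - destruct (Hs nil x y Hu) as [H1 [H2 H3]].
    split; [exact H1 | split; [exact H2 | apply cont2_continuity_2d_pt; exact H3]].
  - split; [|split]; try (exists 0; apply derivable_pt_lim_const).
    apply continuity_2d_pt_const.
  - destruct (IHg x y Hu) as [[l1 A1] [[l2 A2] A3]].
    destruct (IHk x y Hu) as [[m1 B1] [[m2 B2] B3]].
    split; [|split].
    + eexists. apply (derivable_pt_lim_plus (fun t => g t y) (fun t => k t y)); eauto.
    + eexists. apply (derivable_pt_lim_plus (fun t => g x t) (fun t => k x t)); eauto.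
    + apply continuity_2d_pt_plus; auto.
  - destruct (IHg x y Hu) as [[l1 A1] [[l2 A2] A3]].
    destruct (IHk x y Hu) as [[m1 B1] [[m2 B2] B3]].
    split; [|split].
    + eexists. apply (derivable_pt_lim_mult (fun t => g t y) (fun t => k t y)); eauto.
    + eexists. apply (derivable_pt_lim_mult (fun t => g x t) (fun t => k x t)); eauto.
    + apply continuity_2d_pt_mult; auto.
  - destruct (IHg x y Hu) as [[l1 A1] [[l2 A2] A3]]. split; [|split].
    + eexists. apply (derivable_pt_lim_inv (fun t => g t y)); eauto.
    + eexists. apply (derivable_pt_lim_inv (fun t => g x t)); eauto.
    + apply (continuity_1d_2d_pt_comp (fun r => / r)); auto.
      apply (continuity_pt_inv (fun r => r)); [apply continuity_pt_id | apply Hn; auto].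
  - apply pdiff_at_ext with g; auto.
Qed.

Lemma Cinf_px g : Cinf g -> Cinf (px g).
Proof.
  induction 1 as [g Hs|c|g k Hg IHg Hk IHk|g k Hg IHg Hk IHk|g Hg IHg Hn|g k Hg IHg Hgk].
  - apply Cinf_of_smooth, smooth_on_px, Hs.
  - apply Cinf_ext with (fun _ _ => 0); [apply Cinf_const|]. intros; rewrite px_const; auto.
  - apply Cinf_ext with (fun a b => px g a b + px k a b); [apply Cinf_add; auto|].
    intros x y Hu; rewrite px_add; auto; apply Cinf_pdiff; auto.
  - apply Cinf_ext with (fun a b => px g a b * k a b + g a b * px k a b).
    + apply Cinf_add; apply Cinf_mul; auto.
    + intros x y Hu; rewrite px_mul; auto; apply Cinf_pdiff; auto.
  - apply Cinf_ext with (fun a b => (-1 * px g a b) * (/ g a b * / g a b)).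
    + repeat apply Cinf_mul; auto using Cinf_const, Cinf_inv.
    + intros x y Hu; rewrite px_inv; auto; [ring | apply Cinf_pdiff; auto].
  - apply Cinf_ext with (px g); auto. intros x y Hu. apply px_ext; auto.
Qed.

Lemma Cinf_py g : Cinf g -> Cinf (py g).
Proof.
  induction 1 as [g Hs|c|g k Hg IHg Hk IHk|g k Hg IHg Hk IHk|g Hg IHg Hn|g k Hg IHg Hgk].
  - apply Cinf_of_smooth, smooth_on_py, Hs.
  - apply Cinf_ext with (fun _ _ => 0); [apply Cinf_const|]. intros; rewrite py_const; auto.
  - apply Cinf_ext with (fun a b => py g a b + py k a b); [apply Cinf_add; auto|].
    intros x y Hu; rewrite py_add; auto; apply Cinf_pdiff; auto.
  - apply Cinf_ext with (fun a b => py g a b * k a b + g a b * py k a b).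
    + apply Cinf_add; apply Cinf_mul; auto.
    + intros x y Hu; rewrite py_mul; auto; apply Cinf_pdiff; auto.
  - apply Cinf_ext with (fun a b => (-1 * py g a b) * (/ g a b * / g a b)).
    + repeat apply Cinf_mul; auto using Cinf_const, Cinf_inv.
    + intros x y Hu; rewrite py_inv; auto; [ring | apply Cinf_pdiff; auto].
  - apply Cinf_ext with (py g); auto. intros x y Hu. apply py_ext; auto.
Qed.

Lemma Cinf_iterD w g : Cinf g -> Cinf (iterD w g).
Proof. induction w as [|[] w IH]; simpl; auto using Cinf_px, Cinf_py. Qed.

Lemma Cinf_smooth_on g : Cinf g -> smooth_on U g.
Proof.
  intros Hg w x y Hu. destruct (Cinf_pdiff _ (Cinf_iterD w g Hg) x y Hu) as [H1 [H2 H3]].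
  split; [exact H1 | split; [exact H2 | apply cont2_continuity_2d_pt; exact H3]].
Qed.

Lemma Derive_px g a b : pdiff_at g a b -> Derive (fun t => g t b) a = px g a b.
Proof. intros H. apply is_derive_unique, is_derive_Reals, px_spec; auto. Qed.
Lemma Derive_py g a b : pdiff_at g a b -> Derive (fun t => g a t) b = py g a b.
Proof. intros H. apply is_derive_unique, is_derive_Reals, py_spec; auto. Qed.
Lemma ex_derive_px g a b : pdiff_at g a b -> ex_derive (fun t => g t b) a.
Proof. intros H. exists (px g a b). apply is_derive_Reals, px_spec; auto. Qed.
Lemma ex_derive_py g a b : pdiff_at g a b -> ex_derive (fun t => g a t) b.
Proof. intros H. exists (py g a b). apply is_derive_Reals, py_spec; auto. Qed.

Lemma locally_hslice x y : U x y -> locally x (fun z => U z y).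
Proof.
  intros Hu. destruct (open2_hslice x y Hu) as [e [He He']]. exists (mkposreal e He). exact He'.
Qed.
Lemma locally_vslice x y : U x y -> locally y (fun z => U x z).
Proof.
  intros Hu. destruct (open2_vslice x y Hu) as [e [He He']]. exists (mkposreal e He). exact He'.
Qed.

Lemma Derive_px_py g u v : Cinf g -> U u v ->
  Derive (fun z => Derive (fun t => g z t) v) u = px (py g) u v.
Proof.
  intros Hg Huv. rewrite <- Derive_px by (apply Cinf_pdiff; auto using Cinf_py).
  apply Derive_ext_loc. apply (filter_imp (fun z => U z v)); [|apply locally_hslice; auto].
  intros z Hz. apply Derive_py, Cinf_pdiff; auto.
Qed.

Lemma Derive_py_px g u v : Cinf g -> U u v ->
  Derive (fun z => Derive (fun t => g t z) u) v = py (px g) u v.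
Proof.
  intros Hg Huv. rewrite <- Derive_py by (apply Cinf_pdiff; auto using Cinf_px).
  apply Derive_ext_loc. apply (filter_imp (fun z => U u z)); [|apply locally_vslice; auto].
  intros z Hz. apply Derive_px, Cinf_pdiff; auto.
Qed.

Lemma Cinf_schwarz g x y : Cinf g -> U x y -> px (py g) x y = py (px g) x y.
Proof.
  intros Hg Hu. destruct (open2_square x y Hu) as [e [He Hsq]].
  rewrite <- Derive_px_py, <- Derive_py_px by auto.
  apply Schwarz.
  - exists (mkposreal e He). simpl. intros u v H1 H2. assert (Huv := Hsq u v H1 H2).
    split; [|split; [|split]].
    + apply ex_derive_px, Cinf_pdiff; auto.
    + apply ex_derive_py, Cinf_pdiff; auto.
    + apply ex_derive_ext_loc with (fun z => py g z v).
      * apply (filter_imp (fun z => U z v)); [|apply locally_hslice; auto].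
        intros z Hz. symmetry. apply Derive_py, Cinf_pdiff; auto.
      * apply ex_derive_px, Cinf_pdiff; auto using Cinf_py.
    + apply ex_derive_ext_loc with (fun z => px g u z).
      * apply (filter_imp (fun z => U u z)); [|apply locally_vslice; auto].
        intros z Hz. symmetry. apply Derive_px, Cinf_pdiff; auto.
      * apply ex_derive_py, Cinf_pdiff; auto using Cinf_px.
  - apply continuity_2d_pt_local with (px (py g)) e; auto.
    + apply (Cinf_pdiff _ (Cinf_px _ (Cinf_py _ Hg)) x y Hu).
    + intros u v H1 H2. apply Derive_px_py; auto.
  - apply continuity_2d_pt_local with (py (px g)) e; auto.
    + apply (Cinf_pdiff _ (Cinf_py _ (Cinf_px _ Hg)) x y Hu).
    + intros u v H1 H2. apply Derive_py_px; auto.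
Qed.

End OpenSet.

Arguments px : simpl never.
Arguments py : simpl never.

Lemma V5_ext u v :
  c0 u = c0 v -> c1 u = c1 v -> c2 u = c2 v -> c3 u = c3 v -> c4 u = c4 v -> u = v.
Proof. destruct u, v; simpl; intros; subst; reflexivity. Qed.

Definition CinfV (U : R -> R -> Prop) (F : R -> R -> V5) :=
  Cinf U (fun a b => c0 (F a b)) /\ Cinf U (fun a b => c1 (F a b)) /\
  Cinf U (fun a b => c2 (F a b)) /\ Cinf U (fun a b => c3 (F a b)) /\
  Cinf U (fun a b => c4 (F a b)).

Ltac cinf := repeat first [apply Cinf_add | apply Cinf_mul | apply Cinf_const | assumption].
Ltac pdiff := match goal with
  | HU : open2 ?U |- pdiff_at _ _ _ => eapply (Cinf_pdiff U HU); [cinf | eassumption]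
  end.

Section VectorCalculus.
Variable U : R -> R -> Prop.
Hypothesis HU : open2 U.

Lemma Cinf_sub g k : Cinf U g -> Cinf U k -> Cinf U (fun a b => g a b - k a b).
Proof.
  intros. apply Cinf_ext with (fun a b => g a b + (-1) * k a b); [cinf | intros; ring].
Qed.

Lemma CinfV_of_smooth F : smoothV_on U F -> CinfV U F.
Proof. intros (?&?&?&?&?); repeat split; apply Cinf_of_smooth; auto. Qed.
Lemma CinfV_vpx F : CinfV U F -> CinfV U (vpx F).
Proof. intros (?&?&?&?&?); repeat split; apply Cinf_px; auto. Qed.
Lemma CinfV_vpy F : CinfV U F -> CinfV U (vpy F).
Proof. intros (?&?&?&?&?); repeat split; apply Cinf_py; auto. Qed.

Lemma CinfV_vadd F G : CinfV U F -> CinfV U G -> CinfV U (fun a b => vadd (F a b) (G a b)).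
Proof. intros (?&?&?&?&?) (?&?&?&?&?); repeat split; simpl; cinf. Qed.
Lemma CinfV_vscal c F : Cinf U c -> CinfV U F -> CinfV U (fun a b => vscal (c a b) (F a b)).
Proof. intros ? (?&?&?&?&?); repeat split; simpl; cinf. Qed.
Lemma CinfV_vsub F G : CinfV U F -> CinfV U G -> CinfV U (fun a b => vsub (F a b) (G a b)).
Proof. intros. apply CinfV_vadd, CinfV_vscal; auto using Cinf_const. Qed.
Lemma CinfV_ext F G : CinfV U F -> (forall a b, U a b -> F a b = G a b) -> CinfV U G.
Proof.
  intros (H0&H1&H2&H3&H4) E.
  repeat split; [eapply Cinf_ext; [exact H0|] | eapply Cinf_ext; [exact H1|]
    | eapply Cinf_ext; [exact H2|] | eapply Cinf_ext; [exact H3|] | eapply Cinf_ext; [exact H4|]];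
    intros a b Hab; cbv beta; rewrite (E a b Hab); reflexivity.
Qed.

Lemma Cinf_lor A B : CinfV U A -> CinfV U B -> Cinf U (fun a b => lor (A a b) (B a b)).
Proof. intros (?&?&?&?&?) (?&?&?&?&?). unfold lor. apply Cinf_sub; cinf. Qed.

Lemma px_lor A B x y : CinfV U A -> CinfV U B -> U x y ->
  px (fun a b => lor (A a b) (B a b)) x y = lor (vpx A x y) (B x y) + lor (A x y) (vpx B x y).
Proof.
  intros (?&?&?&?&?) (?&?&?&?&?) Hu. unfold lor.
  rewrite px_sub, !px_add, !px_mul by pdiff. simpl. ring.
Qed.
Lemma py_lor A B x y : CinfV U A -> CinfV U B -> U x y ->
  py (fun a b => lor (A a b) (B a b)) x y = lor (vpy A x y) (B x y) + lor (A x y) (vpy B x y).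
Proof.
  intros (?&?&?&?&?) (?&?&?&?&?) Hu. unfold lor.
  rewrite py_sub, !py_add, !py_mul by pdiff. simpl. ring.
Qed.

Lemma lor_vpx_of_eq A B k x y : CinfV U A -> CinfV U B -> Cinf U k -> U x y ->
  (forall a b, U a b -> lor (A a b) (B a b) = k a b) ->
  lor (vpx A x y) (B x y) + lor (A x y) (vpx B x y) = px k x y.
Proof. intros HA HB Hk Hu E. rewrite <- px_lor; auto. apply (px_ext U HU); auto. Qed.
Lemma lor_vpy_of_eq A B k x y : CinfV U A -> CinfV U B -> Cinf U k -> U x y ->
  (forall a b, U a b -> lor (A a b) (B a b) = k a b) ->
  lor (vpy A x y) (B x y) + lor (A x y) (vpy B x y) = py k x y.
Proof. intros HA HB Hk Hu E. rewrite <- py_lor; auto. apply (py_ext U HU); auto. Qed.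

Lemma lor_vpx_of_const A B c x y : CinfV U A -> CinfV U B -> U x y ->
  (forall a b, U a b -> lor (A a b) (B a b) = c) ->
  lor (vpx A x y) (B x y) + lor (A x y) (vpx B x y) = 0.
Proof. intros. rewrite (lor_vpx_of_eq A B (fun _ _ => c)); auto using px_const, Cinf_const. Qed.
Lemma lor_vpy_of_const A B c x y : CinfV U A -> CinfV U B -> U x y ->
  (forall a b, U a b -> lor (A a b) (B a b) = c) ->
  lor (vpy A x y) (B x y) + lor (A x y) (vpy B x y) = 0.
Proof. intros. rewrite (lor_vpy_of_eq A B (fun _ _ => c)); auto using py_const, Cinf_const. Qed.

Lemma vpx_ext F G x y : (forall a b, U a b -> F a b = G a b) -> U x y -> vpx F x y = vpx G x y.
Proof.
  intros E Hu. apply V5_ext; simpl; apply (px_ext U HU); auto;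
    intros a b Hab; rewrite (E a b Hab); auto.
Qed.
Lemma vpy_ext F G x y : (forall a b, U a b -> F a b = G a b) -> U x y -> vpy F x y = vpy G x y.
Proof.
  intros E Hu. apply V5_ext; simpl; apply (py_ext U HU); auto;
    intros a b Hab; rewrite (E a b Hab); auto.
Qed.

Lemma vpx_vadd F G x y : CinfV U F -> CinfV U G -> U x y ->
  vpx (fun a b => vadd (F a b) (G a b)) x y = vadd (vpx F x y) (vpx G x y).
Proof. intros (?&?&?&?&?) (?&?&?&?&?) Hu. apply V5_ext; simpl; apply px_add; pdiff. Qed.
Lemma vpy_vadd F G x y : CinfV U F -> CinfV U G -> U x y ->
  vpy (fun a b => vadd (F a b) (G a b)) x y = vadd (vpy F x y) (vpy G x y).
Proof. intros (?&?&?&?&?) (?&?&?&?&?) Hu. apply V5_ext; simpl; apply py_add; pdiff. Qed.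

Lemma vpx_vscal c F x y : Cinf U c -> CinfV U F -> U x y ->
  vpx (fun a b => vscal (c a b) (F a b)) x y
  = vadd (vscal (px c x y) (F x y)) (vscal (c x y) (vpx F x y)).
Proof. intros ? (?&?&?&?&?) Hu. apply V5_ext; simpl; apply px_mul; pdiff. Qed.
Lemma vpy_vscal c F x y : Cinf U c -> CinfV U F -> U x y ->
  vpy (fun a b => vscal (c a b) (F a b)) x y
  = vadd (vscal (py c x y) (F x y)) (vscal (c x y) (vpy F x y)).
Proof. intros ? (?&?&?&?&?) Hu. apply V5_ext; simpl; apply py_mul; pdiff. Qed.

Lemma vpx_vscal_const (c : R) F x y : CinfV U F -> U x y ->
  vpx (fun a b => vscal c (F a b)) x y = vscal c (vpx F x y).
Proof.
  intros HF Hu. rewrite (vpx_vscal (fun _ _ => c)), px_const; auto using Cinf_const.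
  apply V5_ext; simpl; ring.
Qed.
Lemma vpy_vscal_const (c : R) F x y : CinfV U F -> U x y ->
  vpy (fun a b => vscal c (F a b)) x y = vscal c (vpy F x y).
Proof.
  intros HF Hu. rewrite (vpy_vscal (fun _ _ => c)), py_const; auto using Cinf_const.
  apply V5_ext; simpl; ring.
Qed.

Lemma vpx_vsub F G x y : CinfV U F -> CinfV U G -> U x y ->
  vpx (fun a b => vsub (F a b) (G a b)) x y = vsub (vpx F x y) (vpx G x y).
Proof.
  intros HF HG Hu. unfold vsub at 1.
  rewrite vpx_vadd, vpx_vscal_const; auto. apply CinfV_vscal; auto using Cinf_const.
Qed.
Lemma vpy_vsub F G x y : CinfV U F -> CinfV U G -> U x y ->
  vpy (fun a b => vsub (F a b) (G a b)) x y = vsub (vpy F x y) (vpy G x y).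
Proof.
  intros HF HG Hu. unfold vsub at 1.
  rewrite vpy_vadd, vpy_vscal_const; auto. apply CinfV_vscal; auto using Cinf_const.
Qed.

Lemma vpx_vpy F x y : CinfV U F -> U x y -> vpx (vpy F) x y = vpy (vpx F) x y.
Proof. intros (?&?&?&?&?) Hu. apply V5_ext; simpl; apply (Cinf_schwarz U HU); auto. Qed.

End VectorCalculus.

Lemma lor_sym u v : lor u v = lor v u. Proof. unfold lor; ring. Qed.
Lemma lor_vaddl u v w : lor (vadd u v) w = lor u w + lor v w. Proof. unfold lor; simpl; ring. Qed.
Lemma lor_vaddr u v w : lor w (vadd u v) = lor w u + lor w v. Proof. unfold lor; simpl; ring. Qed.
Lemma lor_vsubl u v w : lor (vsub u v) w = lor u w - lor v w. Proof. unfold lor; simpl; ring. Qed.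
Lemma lor_vsubr u v w : lor w (vsub u v) = lor w u - lor w v. Proof. unfold lor; simpl; ring. Qed.
Lemma lor_vzero_r u : lor u vzero = 0. Proof. unfold lor; simpl; ring. Qed.
Lemma lor_vscall c u w : lor (vscal c u) w = c * lor u w. Proof. unfold lor; simpl; ring. Qed.
Lemma lor_vscalr c u w : lor w (vscal c u) = c * lor w u. Proof. unfold lor; simpl; ring. Qed.

Ltac lor_expand := repeat first
  [ rewrite lor_vaddl | rewrite lor_vaddr | rewrite lor_vsubl | rewrite lor_vsubr
  | rewrite lor_vscall | rewrite lor_vscalr ].
Ltac lor_expand_in H := repeat first
  [ rewrite lor_vaddl in H | rewrite lor_vaddr in H | rewrite lor_vsubl in H
  | rewrite lor_vsubr in H | rewrite lor_vscall in H | rewrite lor_vscalr in H ].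

Module OrthogonalBasis.
Import all_boot all_algebra Rstruct.
Import GRing.Theory.

Section Matrices.
Local Open Scope ring_scope.

Definition vcol (v : V5) : 'cV[R]_5 :=
  \col_(j < 5) match nat_of_ord j with
                | 0 => c0 v | 1 => c1 v | 2 => c2 v | 3 => c3 v | _ => c4 v end.

Definition eta5 : 'M[R]_5 := diag_mx (\row_(j < 5) if nat_of_ord j == 4%N then -1 else 1).

Lemma lor_mx (a b : V5) : lor a b = \sum_(k < 5) vcol a k ord0 * eta5 k k * vcol b k ord0.
Proof. rewrite !big_ord_recl !big_ord0 /eta5 !mxE /= /lor !mulr1n; cbn; ring. Qed.
End Matrices.

(* The Gram matrix [E eta5 E^T] of the rows is diagonal and invertible, so [E] is
   invertible and [E eta5 w = 0] forces [w = 0]. *)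
Lemma vzero_of_orthogonal_frame (e0 e1 e2 e3 e4 w : V5) (d0 d1 d2 d3 d4 : R) :
  d0 <> 0 -> d1 <> 0 -> d2 <> 0 -> d3 <> 0 -> d4 <> 0 ->
  lor e0 e0 = d0 -> lor e1 e1 = d1 -> lor e2 e2 = d2 -> lor e3 e3 = d3 -> lor e4 e4 = d4 ->
  lor e0 e1 = 0 -> lor e0 e2 = 0 -> lor e0 e3 = 0 -> lor e0 e4 = 0 ->
  lor e1 e2 = 0 -> lor e1 e3 = 0 -> lor e1 e4 = 0 ->
  lor e2 e3 = 0 -> lor e2 e4 = 0 -> lor e3 e4 = 0 ->
  lor w e0 = 0 -> lor w e1 = 0 -> lor w e2 = 0 -> lor w e3 = 0 -> lor w e4 = 0 ->
  w = vzero.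
Proof.
(* Opened only here so that the statement is read in [R_scope]. *)
Local Open Scope ring_scope.
move=> nz0 nz1 nz2 nz3 nz4 g00 g11 g22 g33 g44 g01 g02 g03 g04 g12 g13 g14 g23 g24 g34
  w0 w1 w2 w3 w4.
pose sel (i : 'I_5) := match nat_of_ord i with 0 => e0 | 1 => e1 | 2 => e2 | 3 => e3 | _ => e4 end.
pose dd (i : 'I_5) := match nat_of_ord i with 0 => d0 | 1 => d1 | 2 => d2 | 3 => d3 | _ => d4 end.
pose E : 'M[R]_5 := \matrix_(i, j) vcol (sel i) j ord0.
have lorC a b : lor a b = lor b a by rewrite /lor; ring.
have eqo (a b : 'I_5) : (a == b) = (nat_of_ord a == nat_of_ord b)%N by [].
have G : E *m eta5 *m E^T = diag_mx (\row_i dd i).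
  apply/matrixP => i j; rewrite !mxE.
  have -> : \sum_j0 (E *m eta5) i j0 * E^T j0 j = lor (sel i) (sel j).
    rewrite lor_mx; apply: eq_bigr => k _.
    rewrite !mxE (bigD1 k) //= big1 ?addr0 ?mxE //.
    by move=> k' nk; rewrite /eta5 !mxE (negbTE nk) mulr0n mulr0.
  rewrite eqo; case: i j => [i Hi] [j Hj]; rewrite /sel /dd /=.
  case: i Hi => [|[|[|[|[|i]]]]] Hi; try (exfalso; by []);
  case: j Hj => [|[|[|[|[|j]]]]] Hj; try (exfalso; by []);
  rewrite ?mulr1n ?mulr0n //; by rewrite lorC.
pose Dinv : 'M[R]_5 := diag_mx (\row_i (dd i)^-1).
have EinvR : E *m (eta5 *m E^T *m Dinv) = 1%:M.
  rewrite !mulmxA G /Dinv mulmx_diag; apply/matrixP => i j; rewrite !mxE.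
  case: i => [i Hi]; rewrite /dd /=.
  case: i Hi => [|[|[|[|[|i]]]]] Hi; try (exfalso; by []); rewrite divff //; by apply/eqP.
have Ew : E *m (eta5 *m vcol w) = 0.
  apply/matrixP => i j; rewrite !mxE.
  have -> : \sum_j0 E i j0 * (eta5 *m vcol w) j0 j = lor (sel i) w.
    rewrite lor_mx; apply: eq_bigr => k _.
    rewrite !mxE (bigD1 k) //= big1 ?addr0 ?mxE; first by rewrite eqxx mulr1n mulrA.
    move=> k' nk; have nk' : (k == k') = false by rewrite eq_sym; exact: negbTE nk.
    by rewrite /eta5 !mxE nk' mulr0n mul0r.
  case: i => [i Hi]; rewrite /sel /=.
  case: i Hi => [|[|[|[|[|i]]]]] Hi; try (exfalso; by []); by rewrite lorC.
have Z : eta5 *m vcol w = 0.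
  by have := congr1 (mulmx (eta5 *m E^T *m Dinv)) Ew; rewrite mulmxA (mulmx1C EinvR) mul1mx mulmx0.
have EE : eta5 *m eta5 = 1%:M.
  rewrite /eta5 mulmx_diag; apply/matrixP => i j; rewrite !mxE.
  case: i => [i Hi] /=.
  case: i Hi => [|[|[|[|[|i]]]]] Hi; try (exfalso; by []);
    rewrite /= ?mulr1 //; by rewrite mulrNN mulr1.
have Z2 : vcol w = 0 by have := congr1 (mulmx eta5) Z; rewrite mulmxA EE mul1mx mulmx0.
have C k := congr1 (fun M : 'cV[R]_5 => M k ord0) Z2.
have C0 := C (@Ordinal 5 0 isT); have C1 := C (@Ordinal 5 1 isT); have C2 := C (@Ordinal 5 2 isT).
have C3 := C (@Ordinal 5 3 isT); have C4 := C (@Ordinal 5 4 isT).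
rewrite /= !mxE /= in C0 C1 C2 C3 C4.
by case: w {w0 w1 w2 w3 w4 Ew Z Z2 C} C0 C1 C2 C3 C4 => /= ? ? ? ? ? -> -> -> -> ->.
Qed.
End OrthogonalBasis.

Section Frame.
Variables (F X Y N1 N2 : V5) (lam : R).
Hypotheses (lam_neq0 : lam <> 0)
  (gFF : lor F F = 1) (gXX : lor X X = lam) (gYY : lor Y Y = lam)
  (g11 : lor N1 N1 = 1) (g22 : lor N2 N2 = -1)
  (gFX : lor F X = 0) (gFY : lor F Y = 0) (gF1 : lor F N1 = 0) (gF2 : lor F N2 = 0)
  (gXY : lor X Y = 0) (gX1 : lor X N1 = 0) (gX2 : lor X N2 = 0)
  (gY1 : lor Y N1 = 0) (gY2 : lor Y N2 = 0) (g12 : lor N1 N2 = 0).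

Definition frame_coords (v : V5) : V5 := mkV (lor v F) (lor v X) (lor v Y) (lor v N1) (lor v N2).

Definition frame_gram (c d : V5) : R :=
  c0 c * c0 d + (c1 c * c1 d + c2 c * c2 d) / lam + c3 c * c3 d - c4 c * c4 d.

Lemma lor_frame_expansion u v : lor u v = frame_gram (frame_coords u) (frame_coords v).
Proof.
  assert (gXF := gFX); assert (gYF := gFY); assert (g1F := gF1); assert (g2F := gF2);
  assert (gYX := gXY); assert (g1X := gX1); assert (g2X := gX2);
  assert (g1Y := gY1); assert (g2Y := gY2); assert (g21 := g12);
  rewrite lor_sym in gXF, gYF, g1F, g2F, gYX, g1X, g2X, g1Y, g2Y, g21.
  set (w := vsub u (vadd (vscal (lor u F) F) (vadd (vscal (lor u X / lam) X)
              (vadd (vscal (lor u Y / lam) Y)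
                 (vsub (vscal (lor u N1) N1) (vscal (lor u N2) N2)))))).
  assert (Hw : w = vzero).
  { apply (OrthogonalBasis.vzero_of_orthogonal_frame F X Y N1 N2 w 1 lam lam 1 (-1));
      auto; try lra; unfold w; lor_expand;
      rewrite ?gFF, ?gXX, ?gYY, ?g11, ?g22, ?gFX, ?gFY, ?gF1, ?gF2, ?gXY, ?gX1, ?gX2, ?gY1, ?gY2,
        ?g12, ?gXF, ?gYF, ?g1F, ?g2F, ?gYX, ?g1X, ?g2X, ?g1Y, ?g2Y, ?g21; field; auto. }
  assert (E : lor w v = 0) by (rewrite Hw; unfold lor; simpl; ring).
  unfold w in E; lor_expand_in E. unfold frame_gram; simpl.
  rewrite !(lor_sym v). unfold Rdiv in *. lra.
Qed.

Lemma frame_coords_vadd u v : frame_coords (vadd u v) = vadd (frame_coords u) (frame_coords v).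
Proof. unfold frame_coords; apply V5_ext; simpl; apply lor_vaddl. Qed.
Lemma frame_coords_vsub u v : frame_coords (vsub u v) = vsub (frame_coords u) (frame_coords v).
Proof. unfold frame_coords; apply V5_ext; simpl; unfold lor; simpl; ring. Qed.
Lemma frame_coords_vscal c u : frame_coords (vscal c u) = vscal c (frame_coords u).
Proof. unfold frame_coords; apply V5_ext; simpl; apply lor_vscall. Qed.

Lemma frame_coords_F : frame_coords F = mkV 1 0 0 0 0.
Proof. unfold frame_coords; f_equal; auto. Qed.
Lemma frame_coords_X : frame_coords X = mkV 0 lam 0 0 0.
Proof. unfold frame_coords; f_equal; rewrite ?(lor_sym X F); auto. Qed.
Lemma frame_coords_Y : frame_coords Y = mkV 0 0 lam 0 0.
Proof. unfold frame_coords; f_equal; rewrite ?(lor_sym Y F), ?(lor_sym Y X); auto. Qed.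
Lemma frame_coords_N1 : frame_coords N1 = mkV 0 0 0 1 0.
Proof.
  unfold frame_coords; f_equal; rewrite ?(lor_sym N1 F), ?(lor_sym N1 X), ?(lor_sym N1 Y); auto.
Qed.
Lemma frame_coords_N2 : frame_coords N2 = mkV 0 0 0 0 (-1).
Proof.
  unfold frame_coords; f_equal;
    rewrite ?(lor_sym N2 F), ?(lor_sym N2 X), ?(lor_sym N2 Y), ?(lor_sym N2 N1); auto.
Qed.
End Frame.

Definition cadd (a b : Cx) : Cx := (fst a + fst b, snd a + snd b).
Definition cconj (a : Cx) : Cx := (fst a, - snd a).

Lemma cmul_eq0 a b : cmul a b = czero -> b <> czero -> a = czero.
Proof.
  destruct a as [a1 a2], b as [b1 b2]; unfold cmul, czero; simpl.
  intros E Hb. injection E as E1 E2.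
  assert (Hn : 0 < b1 * b1 + b2 * b2).
  { destruct (Req_dec b1 0) as [->|]; [destruct (Req_dec b2 0) as [->|]|]; try nra.
    now destruct Hb. }
  assert (A1 : a1 * (b1 * b1 + b2 * b2) = b1 * (a1 * b1 - a2 * b2) + b2 * (a1 * b2 + a2 * b1))
    by ring.
  assert (A2 : a2 * (b1 * b1 + b2 * b2) = b1 * (a1 * b2 + a2 * b1) - b2 * (a1 * b1 - a2 * b2))
    by ring.
  rewrite E1, E2 in A1, A2.
  f_equal; apply (Rmult_eq_reg_r (b1 * b1 + b2 * b2)); lra.
Qed.

Lemma crscal_eq0 r a : r <> 0 -> crscal r a = czero -> a = czero.
Proof.
  destruct a as [a1 a2]; unfold crscal, czero; simpl. intros Hr E. injection E as E1 E2.
  apply Rmult_integral in E1, E2. f_equal; tauto.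
Qed.

Lemma cconj_eq0 a : cconj a = czero -> a = czero.
Proof.
  destruct a as [a1 a2]; unfold cconj, czero; simpl. intros E. injection E as E1 E2.
  f_equal; lra.
Qed.

Lemma cmul_czero_l b : cmul czero b = czero.
Proof. unfold cmul, czero; simpl. f_equal; ring. Qed.

Lemma nproj_eq0_iff N1 N2 v : lor N1 N1 = 1 -> lor N2 N1 = 0 -> lor v N2 = - lor v N1 ->
  (nproj N1 N2 v = vzero <-> lor v N1 = 0).
Proof.
  intros g11 g21 E. unfold nproj. rewrite E. split.
  - intros Z. apply (f_equal (fun w => lor w N1)) in Z. lor_expand_in Z.
    rewrite g11, g21, (lor_sym vzero), lor_vzero_r in Z. lra.
  - intros Z. rewrite Z. apply V5_ext; simpl; ring.
Qed.

Definition CinfCV (U : R -> R -> Prop) (W : R -> R -> CV) :=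
  CinfV U (fun a b => fst (W a b)) /\ CinfV U (fun a b => snd (W a b)).

Lemma vpx_vzero x y : vpx (fun _ _ => vzero) x y = vzero.
Proof. apply V5_ext; simpl; apply px_const. Qed.
Lemma vpy_vzero x y : vpy (fun _ _ => vzero) x y = vzero.
Proof. apply V5_ext; simpl; apply py_const. Qed.

Lemma cvdz_cv_of G x y :
  cvdz (fun a b => cv_of (G a b)) x y = (vscal (1/2) (vpx G x y), vscal (-1/2) (vpy G x y)).
Proof.
  unfold cvdz; cbn [fst snd cv_of]. rewrite vpx_vzero, vpy_vzero.
  f_equal; apply V5_ext; simpl; lra.
Qed.
Lemma cvdzbar_cv_of G x y :
  cvdzbar (fun a b => cv_of (G a b)) x y = (vscal (1/2) (vpx G x y), vscal (1/2) (vpy G x y)).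
Proof.
  unfold cvdzbar; cbn [fst snd cv_of]. rewrite vpx_vzero, vpy_vzero.
  f_equal; apply V5_ext; simpl; lra.
Qed.

Lemma f_z_eq f : f_z f = fun a b => (vscal (1/2) (vpx f a b), vscal (-1/2) (vpy f a b)).
Proof. do 2 (apply functional_extensionality; intro). apply cvdz_cv_of. Qed.

Lemma e2u_eq f x y :
  e2u f x y = (lor (vpx f x y) (vpx f x y) + lor (vpy f x y) (vpy f x y)) / 4.
Proof.
  unfold e2u, f_zbar. rewrite f_z_eq, cvdzbar_cv_of.
  unfold clor; cbn [fst snd]. lor_expand. field.
Qed.

Section ComplexCalculus.
Variable U : R -> R -> Prop.
Hypothesis HU : open2 U.

Lemma cdzbar_ext g k x y :
  (forall a b, U a b -> g a b = k a b) -> U x y -> cdzbar g x y = cdzbar k x y.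
Proof.
  intros E Hu. unfold cdzbar.
  rewrite !(px_ext U HU (fun a b => fst (g a b)) (fun a b => fst (k a b))),
    !(px_ext U HU (fun a b => snd (g a b)) (fun a b => snd (k a b))),
    !(py_ext U HU (fun a b => fst (g a b)) (fun a b => fst (k a b))),
    !(py_ext U HU (fun a b => snd (g a b)) (fun a b => snd (k a b)));
    auto; intros a b Hab; rewrite E; auto.
Qed.

Lemma cdzbar_clor W V x y : CinfCV U W -> CinfCV U V -> U x y ->
  cdzbar (fun a b => clor (W a b) (V a b)) x y
  = cadd (clor (cvdzbar W x y) (V x y)) (clor (W x y) (cvdzbar V x y)).
Proof.
  intros [HW1 HW2] [HV1 HV2] Hu. unfold cdzbar, clor, cadd, cvdzbar; cbn [fst snd].
  assert (HWV : forall A B, CinfV U A -> CinfV U B -> pdiff_at (fun a b => lor (A a b) (B a b)) x y)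
    by (intros; apply (Cinf_pdiff U HU); auto using Cinf_lor).
  rewrite px_sub, py_sub, px_add, py_add, !(px_lor U HU), !(py_lor U HU) by auto.
  f_equal; lor_expand; field.
Qed.

Lemma Cinf_clor W V : CinfCV U W -> CinfCV U V ->
  Cinf U (fun a b => fst (clor (W a b) (V a b))) /\ Cinf U (fun a b => snd (clor (W a b) (V a b))).
Proof.
  intros [] []. unfold clor; simpl.
  split; [apply Cinf_sub | apply Cinf_add]; apply Cinf_lor; auto.
Qed.

Lemma holo_on_iff g : Cinf U (fun a b => fst (g a b)) -> Cinf U (fun a b => snd (g a b)) ->
  (holo_on U g <-> forall x y, U x y -> cdzbar g x y = czero).
Proof.
  intros H1 H2. unfold holo_on. split; [tauto|].
  intros Z. split; [|split]; auto; apply (Cinf_smooth_on U HU); auto.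
Qed.

End ComplexCalculus.

Section MarginallyTrappedSurface.
Variables (U : R -> R -> Prop) (f N1 N2 H : R -> R -> V5) (h : R -> R -> R).
Hypothesis HU : open2 U.
Hypothesis Hf : smoothV_on U f.
Hypothesis HS : forall x y, U x y -> lor (f x y) (f x y) = 1.
Hypothesis Hconf : forall x y, U x y -> clor (f_z f x y) (f_z f x y) = czero.
Hypothesis Hspace : forall x y, U x y -> 0 < e2u f x y.
Hypothesis HN : forall x y, U x y ->
  lor (N1 x y) (f x y) = 0 /\ lor (N1 x y) (vpx f x y) = 0 /\
  lor (N1 x y) (vpy f x y) = 0 /\
  lor (N2 x y) (f x y) = 0 /\ lor (N2 x y) (vpx f x y) = 0 /\
  lor (N2 x y) (vpy f x y) = 0 /\
  lor (N1 x y) (N1 x y) = 1 /\ lor (N2 x y) (N2 x y) = -1 /\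
  lor (N1 x y) (N2 x y) = 0 /\ lor (N2 x y) e4 < 0.
Hypothesis HH : forall x y, U x y ->
  f_zzbar f x y = cv_of (vadd (vscal (- e2u f x y) (f x y)) (vscal (e2u f x y) (H x y))).
Hypothesis Hh : forall x y, U x y -> H x y = vscal (h x y) (vadd (N1 x y) (N2 x y)).
Hypothesis HH0 : forall x y, U x y -> H x y <> vzero.
Hypothesis HQ : forall x y, U x y -> Qcoef f x y <> czero.

Local Notation X := (vpx f).
Local Notation Y := (vpy f).
Local Notation XX := (vpx (vpx f)).
Local Notation XY := (vpy (vpx f)).
Local Notation YY := (vpy (vpy f)).

Lemma CinfV_f : CinfV U f. Proof. apply CinfV_of_smooth; auto. Qed.
Lemma CinfV_X : CinfV U X. Proof. apply (CinfV_vpx U HU), CinfV_f. Qed.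
Lemma CinfV_Y : CinfV U Y. Proof. apply (CinfV_vpy U HU), CinfV_f. Qed.
Lemma CinfV_XX : CinfV U XX. Proof. apply (CinfV_vpx U HU), CinfV_X. Qed.
Lemma CinfV_XY : CinfV U XY. Proof. apply (CinfV_vpy U HU), CinfV_X. Qed.
Lemma CinfV_YY : CinfV U YY. Proof. apply (CinfV_vpy U HU), CinfV_Y. Qed.
Hint Resolve CinfV_f CinfV_X CinfV_Y CinfV_XX CinfV_XY CinfV_YY : cinf.

Lemma vpx_Y x y : U x y -> vpx Y x y = XY x y.
Proof. intros Hu. apply (vpx_vpy U HU); auto with cinf. Qed.

Lemma vpx_YY x y : U x y -> vpx YY x y = vpy XY x y.
Proof.
  intros Hu. rewrite (vpx_vpy U HU) by auto with cinf.
  apply (vpy_ext U HU); auto using vpx_Y.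
Qed.

Lemma vpx_XY x y : U x y -> vpx XY x y = vpy XX x y.
Proof. intros Hu. apply (vpx_vpy U HU); auto with cinf. Qed.

Lemma conformal_relations x y : U x y ->
  lor (Y x y) (Y x y) = lor (X x y) (X x y) /\ lor (X x y) (Y x y) = 0.
Proof.
  intros Hu. pose proof (Hconf x y Hu) as E. rewrite f_z_eq in E.
  unfold clor, czero in E; cbn [fst snd] in E. injection E as E1 E2.
  lor_expand_in E1. lor_expand_in E2. rewrite (lor_sym (Y x y)) in E2. split; lra.
Qed.

Lemma e2u_half x y : U x y -> e2u f x y = lor (X x y) (X x y) / 2.
Proof. intros Hu. rewrite e2u_eq, (proj1 (conformal_relations x y Hu)). field. Qed.

Lemma e2u_neq0 x y : U x y -> e2u f x y <> 0.
Proof. intros Hu. pose proof (Hspace x y Hu). lra. Qed.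

Lemma Cinf_e2u : Cinf U (e2u f).
Proof.
  apply Cinf_ext with (fun a b => (lor (X a b) (X a b) + lor (Y a b) (Y a b)) * / 4).
  - apply Cinf_mul; [apply Cinf_add; apply Cinf_lor; auto with cinf | apply Cinf_const].
  - intros; rewrite e2u_eq; unfold Rdiv; ring.
Qed.

Lemma f_zz_eq x y : U x y ->
  f_zz f x y = (vscal (1/4) (vsub (XX x y) (YY x y)), vscal (-1/2) (XY x y)).
Proof.
  intros Hu. unfold f_zz, cvdz. rewrite f_z_eq; cbn [fst snd].
  rewrite !(vpx_vscal_const U HU), !(vpy_vscal_const U HU), vpx_Y by auto with cinf.
  f_equal; apply V5_ext; simpl; lra.
Qed.

Lemma laplacian_eq x y : U x y ->
  vadd (XX x y) (YY x y) = vscal (4 * e2u f x y) (vsub (H x y) (f x y)).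
Proof.
  intros Hu. pose proof (f_equal fst (HH x y Hu)) as E.
  unfold f_zzbar, cvdzbar in E. rewrite f_z_eq in E; cbn [fst snd cv_of] in E.
  rewrite (vpx_vscal_const U HU), (vpy_vscal_const U HU) in E by auto with cinf.
  apply V5_ext; [apply (f_equal c0) in E | apply (f_equal c1) in E | apply (f_equal c2) in E
    | apply (f_equal c3) in E | apply (f_equal c4) in E]; simpl in *; lra.
Qed.

Lemma H_of_laplacian x y : U x y ->
  H x y = vadd (f x y) (vscal (/ (4 * e2u f x y)) (vadd (XX x y) (YY x y))).
Proof.
  intros Hu. rewrite laplacian_eq by auto. pose proof (e2u_neq0 x y Hu).
  apply V5_ext; simpl; field; auto.
Qed.

Lemma CinfV_H : CinfV U H.
Proof.
  apply CinfV_ext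
    with (fun a b => vadd (f a b) (vscal (/ (4 * e2u f a b)) (vadd (XX a b) (YY a b)))).
  - apply (CinfV_vadd U); auto with cinf.
    apply (CinfV_vscal U); [|apply (CinfV_vadd U); auto with cinf].
    apply Cinf_inv; [apply Cinf_mul; [apply Cinf_const | apply Cinf_e2u]|].
    intros a b Hab. pose proof (e2u_neq0 a b Hab). lra.
  - intros a b Hab. symmetry. apply H_of_laplacian; auto.
Qed.
Hint Resolve CinfV_H : cinf.
Lemma CinfV_H_sub_f : CinfV U (fun a b => vsub (H a b) (f a b)).
Proof. apply (CinfV_vsub U); auto with cinf. Qed.
Hint Resolve CinfV_H_sub_f : cinf.

Lemma lor_H_r v x y : U x y -> lor v (H x y) = h x y * (lor v (N1 x y) + lor v (N2 x y)).
Proof. intros Hu. rewrite Hh by auto. lor_expand. ring. Qed.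

Lemma lor_H_N1 x y : U x y -> lor (H x y) (N1 x y) = h x y.
Proof.
  intros Hu. rewrite lor_sym, lor_H_r by auto. destruct (HN x y Hu) as (_&_&_&_&_&_&E1&_&E3&_).
  rewrite E1, E3. ring.
Qed.

Lemma h_neq0 x y : U x y -> h x y <> 0.
Proof. intros Hu E. apply (HH0 x y Hu). rewrite Hh, E by auto. apply V5_ext; simpl; ring. Qed.

Lemma lor_H_f x y : U x y -> lor (H x y) (f x y) = 0.
Proof.
  intros Hu. rewrite lor_sym, lor_H_r, !(lor_sym (f x y)) by auto.
  destruct (HN x y Hu) as (E1&_&_&E2&_). rewrite E1, E2. ring.
Qed.
Lemma lor_H_X x y : U x y -> lor (H x y) (X x y) = 0.
Proof.
  intros Hu. rewrite lor_sym, lor_H_r, !(lor_sym (X x y)) by auto.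
  destruct (HN x y Hu) as (_&E1&_&_&E2&_). rewrite E1, E2. ring.
Qed.
Lemma lor_H_Y x y : U x y -> lor (H x y) (Y x y) = 0.
Proof.
  intros Hu. rewrite lor_sym, lor_H_r, !(lor_sym (Y x y)) by auto.
  destruct (HN x y Hu) as (_&_&E1&_&_&E2&_). rewrite E1, E2. ring.
Qed.
Lemma lor_H_H x y : U x y -> lor (H x y) (H x y) = 0.
Proof.
  intros Hu. rewrite lor_H_r, (Hh x y Hu) by auto. destruct (HN x y Hu) as (_&_&_&_&_&_&E1&E2&E3&_).
  lor_expand. rewrite E1, E2, E3, (lor_sym (N2 x y)), E3. ring.
Qed.

Lemma dx_laplacian_eq x y : U x y ->
  vadd (vpx XX x y) (vpx YY x y)
  = vadd (vscal (4 * lor (XX x y) (X x y)) (vsub (H x y) (f x y)))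
         (vscal (4 * e2u f x y) (vsub (vpx H x y) (X x y))).
Proof.
  intros Hu. rewrite <- (vpx_vadd U HU) by auto with cinf.
  rewrite (vpx_ext U HU _ (fun a b => vscal (4 * e2u f a b) (vsub (H a b) (f a b))))
    by (auto; intros; apply laplacian_eq; auto).
  assert (Ce : Cinf U (fun a b => 4 * e2u f a b))
    by (apply Cinf_mul; auto using Cinf_const, Cinf_e2u).
  rewrite (vpx_vscal U HU), (vpx_vsub U HU) by auto with cinf.
  rewrite px_mul, px_const by (apply (Cinf_pdiff U HU); auto using Cinf_const, Cinf_e2u).
  rewrite (px_ext U HU (e2u f) (fun a b => / 2 * lor (X a b) (X a b)))
    by (auto; intros; rewrite e2u_half; auto; field).
  rewrite px_mul, px_const, (px_lor U HU), (lor_sym (X x y) (XX x y))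
    by (auto with cinf; apply (Cinf_pdiff U HU); auto using Cinf_const, Cinf_lor with cinf).
  do 2 f_equal. lra.
Qed.

Lemma dy_laplacian_eq x y : U x y ->
  vadd (vpy XX x y) (vpy YY x y)
  = vadd (vscal (4 * lor (XY x y) (X x y)) (vsub (H x y) (f x y)))
         (vscal (4 * e2u f x y) (vsub (vpy H x y) (Y x y))).
Proof.
  intros Hu. rewrite <- (vpy_vadd U HU) by auto with cinf.
  rewrite (vpy_ext U HU _ (fun a b => vscal (4 * e2u f a b) (vsub (H a b) (f a b))))
    by (auto; intros; apply laplacian_eq; auto).
  assert (Ce : Cinf U (fun a b => 4 * e2u f a b))
    by (apply Cinf_mul; auto using Cinf_const, Cinf_e2u).
  rewrite (vpy_vscal U HU), (vpy_vsub U HU) by auto with cinf.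
  rewrite py_mul, py_const by (apply (Cinf_pdiff U HU); auto using Cinf_const, Cinf_e2u).
  rewrite (py_ext U HU (e2u f) (fun a b => / 2 * lor (X a b) (X a b)))
    by (auto; intros; rewrite e2u_half; auto; field).
  rewrite py_mul, py_const, (py_lor U HU), (lor_sym (X x y) (XY x y))
    by (auto with cinf; apply (Cinf_pdiff U HU); auto using Cinf_const, Cinf_lor with cinf).
  do 2 f_equal. lra.
Qed.
Lemma CinfCV_f_zz : CinfCV U (f_zz f).
Proof.
  split.
  - apply CinfV_ext with (fun a b => vscal (1/4) (vsub (XX a b) (YY a b))).
    + apply (CinfV_vscal U); auto using Cinf_const. apply (CinfV_vsub U); auto with cinf.
    + intros a b Hab; rewrite f_zz_eq; auto.
  - apply CinfV_ext with (fun a b => vscal (-1/2) (XY a b)).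
    + apply (CinfV_vscal U); auto using Cinf_const with cinf.
    + intros a b Hab; rewrite f_zz_eq; auto.
Qed.

Lemma CinfCV_H : CinfCV U (fun a b => cv_of (H a b)).
Proof.
  split; cbn [fst snd cv_of]; auto with cinf.
  repeat split; apply Cinf_const.
Qed.

Lemma cvdzbar_f_zz x y : U x y ->
  cvdzbar (f_zz f) x y
  = (vscal (1/8) (vadd (vpx XX x y) (vpx YY x y)), vscal (-1/8) (vadd (vpy XX x y) (vpy YY x y))).
Proof.
  intros Hu. unfold cvdzbar.
  rewrite
    (vpx_ext U HU (fun a b => fst (f_zz f a b)) (fun a b => vscal (1/4) (vsub (XX a b) (YY a b)))),
    (vpy_ext U HU (fun a b => fst (f_zz f a b)) (fun a b => vscal (1/4) (vsub (XX a b) (YY a b)))),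
    (vpx_ext U HU (fun a b => snd (f_zz f a b)) (fun a b => vscal (-1/2) (XY a b))),
    (vpy_ext U HU (fun a b => snd (f_zz f a b)) (fun a b => vscal (-1/2) (XY a b)))
    by (auto; intros a b Hab; rewrite f_zz_eq; auto).
  rewrite !(vpx_vscal_const U HU), !(vpy_vscal_const U HU), (vpx_vsub U HU), (vpy_vsub U HU),
    vpx_XY, <- vpx_YY by (auto with cinf; apply (CinfV_vsub U); auto with cinf).
  f_equal; apply V5_ext; simpl; lra.
Qed.

Lemma delta_coef_eq_clor x y : U x y -> delta_coef f N1 N2 h x y = clor (f_zz f x y) (cv_of (H x y)).
Proof.
  intros Hu. unfold delta_coef, xi1, xi2, crscal, csub, copp, clor, cv_of.
  rewrite (Hh x y Hu); cbn [fst snd]. f_equal; lor_expand; unfold lor; simpl; ring.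
Qed.

(* [<H_zbar, N1> / h], where [H_zbar = (H_x + i H_y) / 2]. *)
Definition rho x y : Cx :=
  (lor (vpx H x y) (N1 x y) / (2 * h x y), lor (vpy H x y) (N1 x y) / (2 * h x y)).

Lemma lor_X_f x y : U x y -> lor (X x y) (f x y) = 0.
Proof.
  intros Hu. pose proof (lor_vpx_of_const U HU f f 1 x y CinfV_f CinfV_f Hu HS) as E.
  rewrite (lor_sym (f x y)) in E. lra.
Qed.
Lemma lor_Y_f x y : U x y -> lor (Y x y) (f x y) = 0.
Proof.
  intros Hu. pose proof (lor_vpy_of_const U HU f f 1 x y CinfV_f CinfV_f Hu HS) as E.
  rewrite (lor_sym (f x y)) in E. lra.
Qed.

Lemma lor_laplacian_H x y : U x y -> lor (XX x y) (H x y) + lor (YY x y) (H x y) = 0.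
Proof.
  intros Hu. rewrite <- lor_vaddl, laplacian_eq by auto. lor_expand.
  rewrite lor_H_H, (lor_sym (f x y)), lor_H_f by auto. ring.
Qed.

Section AtPoint.
Variables x y : R.
Hypothesis Hxy : U x y.

Local Notation lam := (2 * e2u f x y).
Local Notation coords := (frame_coords (f x y) (X x y) (Y x y) (N1 x y) (N2 x y)).
Local Notation xx1 := (lor (XX x y) (N1 x y)).
Local Notation xx2 := (lor (XX x y) (N2 x y)).
Local Notation xy1 := (lor (XY x y) (N1 x y)).
Local Notation xy2 := (lor (XY x y) (N2 x y)).

Lemma frame_relations_at :
  lam <> 0 /\ lor (f x y) (f x y) = 1 /\ lor (X x y) (X x y) = lam /\ lor (Y x y) (Y x y) = lam /\
  lor (N1 x y) (N1 x y) = 1 /\ lor (N2 x y) (N2 x y) = -1 /\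
  lor (f x y) (X x y) = 0 /\ lor (f x y) (Y x y) = 0 /\ lor (f x y) (N1 x y) = 0 /\
  lor (f x y) (N2 x y) = 0 /\ lor (X x y) (Y x y) = 0 /\ lor (X x y) (N1 x y) = 0 /\
  lor (X x y) (N2 x y) = 0 /\ lor (Y x y) (N1 x y) = 0 /\ lor (Y x y) (N2 x y) = 0 /\
  lor (N1 x y) (N2 x y) = 0.
Proof.
  pose proof (e2u_neq0 x y Hxy). pose proof (e2u_half x y Hxy).
  destruct (conformal_relations x y Hxy) as [EY EXY].
  destruct (HN x y Hxy) as (n1f&n1X&n1Y&n2f&n2X&n2Y&g11&g22&g12&_).
  repeat split; first [ apply HS; auto | assumption | lra
    | rewrite lor_sym; first [assumption | apply lor_X_f | apply lor_Y_f]; auto ].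
Qed.

Ltac from_frame_relations lem :=
  destruct frame_relations_at as (?&?&?&?&?&?&?&?&?&?&?&?&?&?&?&?); apply lem; auto.

Lemma lor_in_frame u v : lor u v = frame_gram lam (coords u) (coords v).
Proof. from_frame_relations lor_frame_expansion. Qed.

Lemma coords_f : coords (f x y) = mkV 1 0 0 0 0.
Proof. from_frame_relations frame_coords_F. Qed.
Lemma coords_X : coords (X x y) = mkV 0 lam 0 0 0.
Proof. from_frame_relations frame_coords_X. Qed.
Lemma coords_Y : coords (Y x y) = mkV 0 0 lam 0 0.
Proof. from_frame_relations frame_coords_Y. Qed.
Lemma coords_N1 : coords (N1 x y) = mkV 0 0 0 1 0.
Proof. from_frame_relations frame_coords_N1. Qed.
Lemma coords_N2 : coords (N2 x y) = mkV 0 0 0 0 (-1).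
Proof. from_frame_relations frame_coords_N2. Qed.

Lemma coords_H : coords (H x y) = mkV 0 0 0 (h x y) (- h x y).
Proof.
  destruct (HN x y Hxy) as (_&_&_&_&_&_&_&g22&g12&_).
  unfold frame_coords. rewrite lor_H_f, lor_H_X, lor_H_Y, lor_H_N1, lor_sym, lor_H_r by auto.
  rewrite g22, (lor_sym (N2 x y)), g12.
  f_equal. ring.
Qed.

Lemma coords_XX :
  coords (XX x y) = mkV (- lam) (lor (XX x y) (X x y)) (- lor (XY x y) (X x y)) xx1 xx2.
Proof.
  pose proof (lor_vpx_of_const U HU X f 0 x y CinfV_X CinfV_f Hxy lor_X_f) as Ef.
  pose proof (lor_vpx_of_const U HU X Y 0 x y CinfV_X CinfV_Y Hxy
                (fun a b Hab => proj2 (conformal_relations a b Hab))) as EY.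
  rewrite vpx_Y, (lor_sym (X x y) (XY x y)) in EY by auto.
  destruct frame_relations_at as (_&_&EX&_).
  unfold frame_coords. f_equal; lra.
Qed.

Lemma coords_XY : coords (XY x y) = mkV 0 (lor (XY x y) (X x y)) (lor (XX x y) (X x y)) xy1 xy2.
Proof.
  pose proof (lor_vpy_of_const U HU X f 0 x y CinfV_X CinfV_f Hxy lor_X_f) as Ef.
  pose proof (lor_vpx_of_eq U HU Y Y (fun a b => lor (X a b) (X a b)) x y CinfV_Y CinfV_Y
                (Cinf_lor U X X CinfV_X CinfV_X) Hxy
                (fun a b Hab => proj1 (conformal_relations a b Hab))) as EY.
  rewrite (px_lor U HU), vpx_Y, (lor_sym (X x y) (XX x y)), (lor_sym (Y x y) (XY x y)) in EY
    by auto with cinf.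
  destruct frame_relations_at as (_&_&_&_&_&_&_&_&_&_&EXY&_).
  unfold frame_coords. f_equal; lra.
Qed.

Lemma coords_YY : coords (YY x y)
  = mkV (- lam) (- lor (XX x y) (X x y)) (lor (XY x y) (X x y))
        (2 * lam * h x y - xx1) (- (2 * lam * h x y) - xx2).
Proof.
  assert (E : YY x y = vsub (vscal (4 * e2u f x y) (vsub (H x y) (f x y))) (XX x y)).
  { pose proof (laplacian_eq x y Hxy) as L.
    apply V5_ext; [apply (f_equal c0) in L | apply (f_equal c1) in L | apply (f_equal c2) in L
      | apply (f_equal c3) in L | apply (f_equal c4) in L]; simpl in *; lra. }
  rewrite E, frame_coords_vsub, frame_coords_vscal, frame_coords_vsub.
  rewrite coords_H, coords_f, coords_XX.
  apply V5_ext; simpl; lra.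
Qed.

Lemma coords_Hx : coords (vpx H x y)
  = mkV 0 (- (h x y * (xx1 + xx2))) (- (h x y * (xy1 + xy2)))
        (lor (vpx H x y) (N1 x y)) (- lor (vpx H x y) (N1 x y)).
Proof.
  pose proof (lor_vpx_of_const U HU H f 0 x y CinfV_H CinfV_f Hxy lor_H_f) as Ef.
  pose proof (lor_vpx_of_const U HU H X 0 x y CinfV_H CinfV_X Hxy lor_H_X) as EX.
  pose proof (lor_vpx_of_const U HU H Y 0 x y CinfV_H CinfV_Y Hxy lor_H_Y) as EY.
  pose proof (lor_vpx_of_const U HU H H 0 x y CinfV_H CinfV_H Hxy lor_H_H) as EH.
  rewrite lor_H_X in Ef by auto. rewrite vpx_Y in EY by auto.
  rewrite (lor_sym (H x y)), lor_H_r in EX, EY by auto.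
  rewrite (lor_sym (H x y)), lor_H_r in EH by auto.
  pose proof (h_neq0 x y Hxy).
  assert (E2 : lor (vpx H x y) (N2 x y) = - lor (vpx H x y) (N1 x y)).
  { apply (Rmult_eq_reg_l (h x y)); auto. lra. }
  unfold frame_coords. f_equal; lra.
Qed.

Lemma coords_Hy : coords (vpy H x y)
  = mkV 0 (- (h x y * (xy1 + xy2))) (h x y * (xx1 + xx2))
        (lor (vpy H x y) (N1 x y)) (- lor (vpy H x y) (N1 x y)).
Proof.
  pose proof (lor_vpy_of_const U HU H f 0 x y CinfV_H CinfV_f Hxy lor_H_f) as Ef.
  pose proof (lor_vpy_of_const U HU H X 0 x y CinfV_H CinfV_X Hxy lor_H_X) as EX.
  pose proof (lor_vpy_of_const U HU H Y 0 x y CinfV_H CinfV_Y Hxy lor_H_Y) as EY.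
  pose proof (lor_vpy_of_const U HU H H 0 x y CinfV_H CinfV_H Hxy lor_H_H) as EH.
  pose proof (lor_laplacian_H x y Hxy) as EL.
  rewrite lor_H_Y in Ef by auto.
  rewrite (lor_sym (H x y)), lor_H_r in EX by auto.
  rewrite (lor_sym (H x y)) in EY. rewrite (lor_H_r (XX x y)) in EL by auto.
  rewrite (lor_sym (H x y)), lor_H_r in EH by auto.
  pose proof (h_neq0 x y Hxy).
  assert (E2 : lor (vpy H x y) (N2 x y) = - lor (vpy H x y) (N1 x y)).
  { apply (Rmult_eq_reg_l (h x y)); auto. lra. }
  unfold frame_coords. f_equal; lra.
Qed.

(* Every inner product is replaced by its expansion in the frame; the coordinates of all the
   vectors involved are known, which turns each identity into field arithmetic. *)
Ltac expand_in_frame :=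
  rewrite ?lor_vzero_r, !lor_in_frame;
  repeat first [rewrite frame_coords_vsub | rewrite frame_coords_vadd | rewrite frame_coords_vscal];
  rewrite ?coords_f, ?coords_X, ?coords_Y, ?coords_N1, ?coords_N2, ?coords_H,
    ?coords_XX, ?coords_XY, ?coords_YY, ?coords_Hx, ?coords_Hy;
  unfold frame_gram; simpl.

Lemma delta_dzbar : cdzbar (delta_coef f N1 N2 h) x y = cmul (rho x y) (delta_coef f N1 N2 h x y).
Proof.
  rewrite (cdzbar_ext U HU _ (fun a b => clor (f_zz f a b) (cv_of (H a b))))
    by (auto using delta_coef_eq_clor).
  rewrite (cdzbar_clor U HU) by auto using CinfCV_f_zz, CinfCV_H.
  rewrite delta_coef_eq_clor, cvdzbar_f_zz, dx_laplacian_eq, dy_laplacian_eq, f_zz_eq, cvdzbar_cv_of by auto.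
  unfold rho, cmul, cadd, clor, cv_of; cbn [fst snd].
  expand_in_frame.
  pose proof (h_neq0 x y Hxy). pose proof (e2u_neq0 x y Hxy).
  f_equal; field; auto.
Qed.

Lemma Q_dzbar :
  cdzbar (Qcoef f) x y = crscal (2 * e2u f x y) (cmul (cconj (rho x y)) (delta_coef f N1 N2 h x y)).
Proof.
  change (Qcoef f) with (fun a b => clor (f_zz f a b) (f_zz f a b)).
  rewrite (cdzbar_clor U HU) by auto using CinfCV_f_zz.
  rewrite delta_coef_eq_clor, cvdzbar_f_zz, dx_laplacian_eq, dy_laplacian_eq, f_zz_eq by auto.
  unfold rho, cconj, crscal, cmul, cadd, clor, cv_of; cbn [fst snd].
  expand_in_frame.
  pose proof (h_neq0 x y Hxy). pose proof (e2u_neq0 x y Hxy).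
  f_equal; field; auto.
Qed.

Lemma Q_eq0_of_delta_eq0 : delta_coef f N1 N2 h x y = czero -> Qcoef f x y = czero.
Proof.
  pose proof (h_neq0 x y Hxy). pose proof (e2u_neq0 x y Hxy).
  rewrite delta_coef_eq_clor by auto. unfold Qcoef. rewrite f_zz_eq by auto.
  unfold clor, czero, cv_of; cbn [fst snd]. intros E. injection E as E1 E2. revert E1 E2.
  expand_in_frame. intros E1 E2.
  assert (A : h x y * (xx1 + xx2) = 0)
    by (transitivity (2 * 0); [rewrite <- E1; field; auto | ring]).
  assert (B : h x y * (xy1 + xy2) = 0)
    by (transitivity (-2 * 0); [rewrite <- E2; field; auto | ring]).
  apply Rmult_integral in A, B.
  replace xx2 with (- xx1) by (destruct A; [contradiction | lra]).
  replace xy2 with (- xy1) by (destruct B; [contradiction | lra]).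
  f_equal; field; auto.
Qed.

Lemma rho_eq0_iff :
  rho x y = czero <-> lor (vpx H x y) (N1 x y) = 0 /\ lor (vpy H x y) (N1 x y) = 0.
Proof.
  pose proof (h_neq0 x y Hxy). unfold rho, czero, Rdiv. split.
  - intros E. injection E as E1 E2. apply Rmult_integral in E1, E2.
    assert (/ (2 * h x y) <> 0) by (apply Rinv_neq_0_compat; lra). tauto.
  - intros [E1 E2]. rewrite E1, E2. f_equal; ring.
Qed.

Lemma parallel_at_iff :
  nproj (N1 x y) (N2 x y) (vpx H x y) = vzero /\ nproj (N1 x y) (N2 x y) (vpy H x y) = vzero
  <-> rho x y = czero.
Proof.
  destruct (HN x y Hxy) as (_&_&_&_&_&_&g11&_&g12&_). rewrite lor_sym in g12.
  rewrite rho_eq0_iff, !nproj_eq0_iff; try tauto; auto.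
  - exact (f_equal c4 coords_Hy).
  - exact (f_equal c4 coords_Hx).
Qed.

Lemma delta_neq0 : delta_coef f N1 N2 h x y <> czero.
Proof. intros E. apply (HQ x y Hxy), Q_eq0_of_delta_eq0, E. Qed.

Lemma Q_dzbar_eq0_iff : cdzbar (Qcoef f) x y = czero <-> rho x y = czero.
Proof.
  rewrite Q_dzbar. split.
  - intros E. apply crscal_eq0 in E; [|pose proof (Hspace x y Hxy); lra].
    exact (cconj_eq0 _ (cmul_eq0 _ _ E delta_neq0)).
  - intros ->. unfold crscal, cmul, cconj, czero; simpl. f_equal; ring.
Qed.

Lemma delta_dzbar_eq0_iff : cdzbar (delta_coef f N1 N2 h) x y = czero <-> rho x y = czero.
Proof.
  rewrite delta_dzbar. split.
  - intros E. exact (cmul_eq0 _ _ E delta_neq0).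
  - intros ->. apply cmul_czero_l.
Qed.

End AtPoint.

Lemma Cinf_Qcoef :
  Cinf U (fun a b => fst (Qcoef f a b)) /\ Cinf U (fun a b => snd (Qcoef f a b)).
Proof. exact (Cinf_clor U _ _ CinfCV_f_zz CinfCV_f_zz). Qed.

Lemma Cinf_delta :
  Cinf U (fun a b => fst (delta_coef f N1 N2 h a b)) /\
  Cinf U (fun a b => snd (delta_coef f N1 N2 h a b)).
Proof.
  destruct (Cinf_clor U _ _ CinfCV_f_zz CinfCV_H) as [C1 C2].
  split; [eapply Cinf_ext; [exact C1|] | eapply Cinf_ext; [exact C2|]];
    intros a b Hab; cbv beta; rewrite delta_coef_eq_clor; auto.
Qed.

Theorem conditions_iff_rho_eq0 :
  (holo_on U (Qcoef f) <-> forall x y, U x y -> rho x y = czero) /\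
  (holo_on U (delta_coef f N1 N2 h) <-> forall x y, U x y -> rho x y = czero) /\
  (parallel_mean_curv U N1 N2 H <-> forall x y, U x y -> rho x y = czero).
Proof.
  destruct Cinf_Qcoef, Cinf_delta.
  rewrite !(holo_on_iff U HU) by auto. unfold parallel_mean_curv.
  split; [|split]; split; intros Z x y Hu; specialize (Z x y Hu).
  - now apply Q_dzbar_eq0_iff.
  - now apply Q_dzbar_eq0_iff.
  - now apply delta_dzbar_eq0_iff.
  - now apply delta_dzbar_eq0_iff.
  - now apply parallel_at_iff.
  - now apply parallel_at_iff.
Qed.

End MarginallyTrappedSurface.

Theorem mainTheorem8
  (U : R -> R -> Prop) (f N1 N2 H : R -> R -> V5) (h : R -> R -> R)
  (HU : open2 U)
  (Hf : smoothV_on U f) (HN1 : smoothV_on U N1) (HN2 : smoothV_on U N2)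
  (HS : forall x y, U x y -> lor (f x y) (f x y) = 1)
  (Hconf : forall x y, U x y -> clor (f_z f x y) (f_z f x y) = czero)
  (Hspace : forall x y, U x y -> 0 < e2u f x y)
  (HN : forall x y, U x y ->
     lor (N1 x y) (f x y) = 0 /\ lor (N1 x y) (vpx f x y) = 0 /\
     lor (N1 x y) (vpy f x y) = 0 /\
     lor (N2 x y) (f x y) = 0 /\ lor (N2 x y) (vpx f x y) = 0 /\
     lor (N2 x y) (vpy f x y) = 0 /\
     lor (N1 x y) (N1 x y) = 1 /\ lor (N2 x y) (N2 x y) = -1 /\
     lor (N1 x y) (N2 x y) = 0 /\ lor (N2 x y) e4 < 0)
  (HH : forall x y, U x y ->
     f_zzbar f x y = cv_of (vadd (vscal (- e2u f x y) (f x y)) (vscal (e2u f x y) (H x y))))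
  (Hmt : forall x y, U x y -> lor (H x y) (H x y) = 0)
  (Hh : forall x y, U x y -> H x y = vscal (h x y) (vadd (N1 x y) (N2 x y)))
  (HH0 : forall x y, U x y -> H x y <> vzero)
  (HQ : forall x y, U x y -> Qcoef f x y <> czero) :
  (holo_on U (Qcoef f) <-> holo_on U (delta_coef f N1 N2 h)) /\
  (holo_on U (delta_coef f N1 N2 h) <-> parallel_mean_curv U N1 N2 H).
Proof.
  (* [Hmt] follows from [Hh] and the frame relations. *)
  destruct (conditions_iff_rho_eq0 U f N1 N2 H h HU Hf HS Hconf Hspace HN HH Hh HH0 HQ)
    as (EQ & Edelta & Epar).
  rewrite EQ, Edelta, Epar. tauto.
Qed.
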